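(* Let $\widehat{\mathbf Y}$ be an optimal solution of the SDP, $\epsilon=\|\widehat{\mathbf Y}-\mathbf Y^*\|_1/\|\mathbf Y^*\|_1$, and let $U_1,\dots,U_k$ be the sets produced by Step 2 applied to the output of Step 1 on input $\widehat{\mathbf Y},n,k$ (both described in the context). Then there exist a permutation $\pi$ of $[k]$ and a universal constant $C>0$ such that \[ \Big|\bigcup_{a\in[k]}C^*_a\cap U_{\pi(a)}\Big|\ge(1-C\epsilon)n. \]
   Context: Integers $n\ge4$, $k\ge2$, $k\mid n$; points $\mathbf h_1,\dots,\mathbf h_n\in\mathbb R^d$ with ground-truth labels $\sigma^*:[n]\to[k]$ and clusters $C^*_a=\{i:\sigma^*(i)=a\}$, each of size $n/k$. $Y^*_{ij}=\mathbb 1\{\sigma^*(i)=\sigma^*(j)\}$. SDP: $A_{ij}=\|\mathbf h_i-\mathbf h_j\|_2^2$; $\widehat{\mathbf Y}$ minimizes $\langle\mathbf Y,\mathbf A\rangle$ subject to $\mathbf Y\mathbf 1_n=\frac nk\mathbf 1_n$, $\mathbf Y\succeq0$, $\mathrm{diag}(\mathbf Y)=\mathbf 1_n$, $\mathbf Y\ge0$. $\|\cdot\|_1$ is the entrywise $\ell_1$ norm; $\widehat{\mathbf Y}_{u\bullet}$ is the $u$-th row. Step 1: set $V=[n]$, $t=0$; while $V\setminus\bigcup_{i\le t}B_i\ne\emptyset$: increase $t$, let $V_t=V\setminus\bigcup_{i<t}B_i$, for $u\in V_t$ let $B(u)=\{w\in V_t:\|\widehat{\mathbf Y}_{u\bullet}-\widehat{\mathbf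 Y}_{w\bullet}\|_1\le\frac{n}{4k}\}$, let $B_t$ be a largest $B(u)$, truncated arbitrarily to size $n/k$ if larger; output $B_1,\dots,B_{k'}$. Step 2: choose the $k$ sets of largest cardinality among $B_1,\dots,B_{k'}$, rename them $U_1,\dots,U_k$, and distribute the elements of the remaining sets arbitrarily among $U_1,\dots,U_k$ so that each $U_t$ has exactly $n/k$ elements. *)

From HB Require Import structures.
From mathcomp Require Import all_boot all_order all_algebra all_fingroup.
From mathcomp Require Import reals.
Set Implicit Arguments. Unset Strict Implicit. Unset Printing Implicit Defensive.
Import Order.TTheory GRing.Theory Num.Theory.
Local Open Scope ring_scope.

Section Defs.
Variable R : realType.

Definition sqdist (d : nat) (x y : 'rV[R]_d) : R :=
  \sum_(l < d) (x ord0 l - y ord0 l) ^+ 2.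

Definition distmx (n d : nat) (h : 'I_n -> 'rV[R]_d) : 'M[R]_n :=
  \matrix_(i, j) sqdist (h i) (h j).

Definition Ystar (n k : nat) (sigma : 'I_n -> 'I_k) : 'M[R]_n :=
  \matrix_(i, j) (sigma i == sigma j)%:R.

Definition cluster (n k : nat) (sigma : 'I_n -> 'I_k) (a : 'I_k) : {set 'I_n} :=
  [set i | sigma i == a].

Definition l1norm (m p : nat) (M : 'M[R]_(m, p)) : R :=
  \sum_(i < m) \sum_(j < p) `|M i j|.

Definition frob (n : nat) (Y A : 'M[R]_n) : R :=
  \sum_(i < n) \sum_(j < n) Y i j * A i j.

Definition psd (n : nat) (Y : 'M[R]_n) : Prop :=
  Y^T = Y /\ forall x : 'cV[R]_n, 0 <= (x^T *m Y *m x) ord0 ord0.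

Definition sdp_feasible (n k : nat) (Y : 'M[R]_n) : Prop :=
  [/\ forall i, \sum_(j < n) Y i j = (n %/ k)%N%:R,
      psd Y,
      forall i, Y i i = 1
    & forall i j, 0 <= Y i j].

Definition sdp_optimal (n k d : nat) (h : 'I_n -> 'rV[R]_d) (Y : 'M[R]_n) : Prop :=
  sdp_feasible k Y /\
  forall Y' : 'M[R]_n, sdp_feasible k Y' -> frob Y (distmx h) <= frob Y' (distmx h).

Definition rowdist (n : nat) (Y : 'M[R]_n) (u w : 'I_n) : R :=
  \sum_(j < n) `|Y u j - Y w j|.

(* V_t = [n] \ (B_1 u ... u B_{t-1}), with 0-based indexing of the list Bs *)
Definition Vrem (n : nat) (Bs : seq {set 'I_n}) (t : nat) : {set 'I_n} :=
  ~: \bigcup_(i < t) nth set0 Bs i.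

Definition ball (n k : nat) (Y : 'M[R]_n) (V : {set 'I_n}) (u : 'I_n) : {set 'I_n} :=
  [set w in V | rowdist Y u w <= n%:R / (4 * k)%:R].

(* Bs is a possible output B_1,...,B_{k'} of Step 1 on input Y, n, k
   (all arbitrary choices allowed) *)
Definition step1_output (n k : nat) (Y : 'M[R]_n) (Bs : seq {set 'I_n}) : Prop :=
  (forall t : nat, (t < size Bs)%N ->
     let V := Vrem Bs t in
     V != set0 /\
     exists u, [/\ u \in V,
       (forall u', u' \in V -> #|ball k Y V u'| <= #|ball k Y V u|)%N
     & if (#|ball k Y V u| <= (n %/ k)%N)%N
       then nth set0 Bs t = ball k Y V u
       else nth set0 Bs t \subset ball k Y V u /\ #|nth set0 Bs t| = (n %/ k)%N])
  /\ Vrem Bs (size Bs) = set0.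

End Defs.

Definition step2_output (n k : nat) (Bs : seq {set 'I_n}) (U : 'I_k -> {set 'I_n}) : Prop :=
  exists f : 'I_k -> 'I_(size Bs),
    [/\ injective f,
        forall (t : 'I_k) (j : 'I_(size Bs)), j \notin codom f ->
          (#|nth set0 Bs j| <= #|nth set0 Bs (f t)|)%N,
        forall t, nth set0 Bs (f t) \subset U t,
        forall t, #|U t| = (n %/ k)%N
      &
        (forall t t', t != t' -> [disjoint U t & U t']) /\
        \bigcup_(t < k) U t = setT].

(* Call a row u of Yhat good when its l1 distance to the row of Y* is at most
   m/8, where m = n/k. Two good rows of one cluster are then within the ball
   radius m/4 of each other, while a point within m/4 of good rows of two
   different clusters would put rows of Y* at distance 2m within 3m/4. Hence,
   for each cluster a with a good point, the first block of Step 1 meeting its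
   good part contains no good point of another cluster and, by the maximality
   of the chosen ball, is at least as large as that good part. These blocks are
   distinct, so they cover all but at most #bad points; those not selected in
   Step 2 are no larger than the selected blocks they displace, which lie
   outside all cluster blocks. Matching each cluster with its selected block
   thus misclassifies at most 3 #bad points, and Markov's inequality gives
   #bad <= 8 ||Yhat - Y*||_1 / m, i.e. C = 24. *)

From mathcomp Require Import all_boot all_order all_algebra all_fingroup.
From mathcomp Require Import reals.
From mathcomp Require Import ring lra.
Set Implicit Arguments. Unset Strict Implicit. Unset Printing Implicit Defensive.
Import Order.TTheory GRing.Theory Num.Theory.

Section FinsetFacts.
Variable T : finType.

Lemma card_bigcup_disjoint (I : finType) (J : {set I}) (F : I -> {set T}) :
  {in J &, forall i j, i != j -> [disjoint F i & F j]} ->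
  #|\bigcup_(j in J) F j| = \sum_(j in J) #|F j|.
Proof.
move=> disjF; have disjFJ i j : i != j ->
    [disjoint if i \in J then F i else set0 & if j \in J then F j else set0].
  case: ifP => iJ; case: ifP => jJ ij; first exact: disjF;
    by rewrite -setI_eq0 ?set0I ?setI0.
rewrite big_mkcond [RHS]big_mkcond /= -sum1_card.
rewrite (partition_disjoint_bigcup _ _ disjFJ).
by apply: eq_bigr => j _; rewrite sum1_card; case: ifP; rewrite ?cards0.
Qed.

Lemma leq_card_bigcup_exchange (I : finType) (B : I -> {set T}) (S J : {set I}) :
  (forall i j, i != j -> [disjoint B i & B j]) ->
  {in S & ~: S, forall i j, #|B j| <= #|B i|} -> #|J| <= #|S| ->
  #|\bigcup_(j in J :\: S) B j| <= #|\bigcup_(j in S :\: J) B j|.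
Proof.
move=> disjB largeS cardJS.
have disjB' K : {in K &, forall i j, i != j -> [disjoint B i & B j]}.
  by move=> i j _ _; apply: disjB.
rewrite !card_bigcup_disjoint //.
pose M := \max_(j in J :\: S) #|B j|.
have cardD : #|J :\: S| <= #|S :\: J|.
  by rewrite -(leq_add2l #|J :&: S|) cardsID setIC cardsID.
apply: (@leq_trans (#|J :\: S| * M)).
  rewrite -sum_nat_const; apply: leq_sum => j jJS.
  exact: (leq_bigmax_cond (F := fun j => #|B j|)).
apply: (@leq_trans (#|S :\: J| * M)); first by rewrite leq_mul2r cardD orbT.
rewrite -sum_nat_const; apply: leq_sum => i /setDP[iS _].
apply/bigmax_leqP => j /setDP[_ jS]; apply: largeS => //.
by rewrite inE.
Qed.

Lemma perm_extend_in (D : {set T}) (g : T -> T) :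
  {in D &, injective g} -> exists p : {perm T}, {in D, forall x, p x = g x}.
Proof.
move=> ginj.
set sD := enum (~: D); set sE := enum (~: (g @: D)).
have size_sDE : size sD = size sE.
  rewrite -!cardE; apply/eqP; rewrite -(eqn_add2l #|D|) cardsC.
  by rewrite -{1}(card_in_imset ginj) cardsC.
pose h x := if x \in D then g x else nth x sE (index x sD).
have nth_sE x : x \notin D -> nth x sE (index x sD) \in sE.
  by move=> xD; apply: mem_nth; rewrite -size_sDE index_mem mem_enum inE.
have hinj : injective h.
  move=> x y; rewrite /h; case: ifP => xD; case: ifP => yD.
  - exact: ginj.
  - move=> e; have := nth_sE y (negbT yD).
    by rewrite -e mem_enum inE imset_f.
  - move=> e; have := nth_sE x (negbT xD).
    by rewrite e mem_enum inE imset_f.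
  - have xs : x \in sD by rewrite mem_enum inE xD.
    have ys : y \in sD by rewrite mem_enum inE yD.
    have iy : index y sD < size sE by rewrite -size_sDE index_mem.
    rewrite (set_nth_default x y iy) => /eqP.
    rewrite nth_uniq ?enum_uniq -?size_sDE ?index_mem // => /eqP e.
    by rewrite -(nth_index x xs) e nth_index.
by exists (perm hinj) => x xD; rewrite permE /h xD.
Qed.

End FinsetFacts.

Section Step1Blocks.
Variables (R : realType) (n k : nat) (Y : 'M[R]_n) (Bs : seq {set 'I_n}).
Local Notation B t := (nth set0 Bs t).
Local Notation V t := (Vrem Bs t).

Lemma notin_Vrem s t x : s < t -> x \in B s -> x \notin V t.
Proof. by move=> st xs; rewrite inE negbK; apply/bigcupP; exists (Ordinal st). Qed.

Lemma subset_Vrem (X : {set 'I_n}) t :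
  (forall s, s < t -> [disjoint X & B s]) -> X \subset V t.
Proof.
move=> disjX; apply/subsetP => x xX; rewrite inE; apply/bigcupP => -[s _ xs].
by have /pred0P/(_ x) := disjX s (ltn_ord s); rewrite /= xX xs.
Qed.

Hypothesis step1 : step1_output k Y Bs.

Lemma step1_block_center t :
  t < size Bs -> exists2 u, u \in V t & B t \subset ball k Y (V t) u.
Proof.
case: step1 => /(_ t) step1t _ /step1t[_ [u [uV _ Bt]]].
by exists u => //; move: Bt; case: ifP => _ => [-> | []].
Qed.

Lemma step1_block_max t v (X : {set 'I_n}) :
  t < size Bs -> v \in V t -> X \subset ball k Y (V t) v -> #|X| <= n %/ k ->
  #|X| <= #|B t|.
Proof.
case: step1 => /(_ t) step1t _ /step1t[_ [u [_ umax Bt]]] vV Xv Xm.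
have Xu := leq_trans (subset_leq_card Xv) (umax v vV).
by move: Bt; case: ifP => _ => [-> // | [_ ->]].
Qed.

Lemma step1_block_sub t : t < size Bs -> B t \subset V t.
Proof.
move=> /step1_block_center[u _ Bu]; apply: subset_trans Bu _.
by apply/subsetP => x; rewrite inE => /andP[].
Qed.

Lemma step1_blocks_disjoint s t :
  s < size Bs -> t < size Bs -> s != t -> [disjoint B s & B t].
Proof.
have lt_disj s' t' : s' < t' -> t' < size Bs -> [disjoint B s' & B t'].
  move=> st tN; apply/pred0P => x /=; apply/andP => -[xs xt].
  by have := subsetP (step1_block_sub tN) x xt; rewrite (negbTE (notin_Vrem st xs)).
move=> sN tN; rewrite neq_ltn => /orP[st|ts]; first exact: lt_disj.
by rewrite disjoint_sym; apply: lt_disj.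
Qed.

Lemma step1_blocks_cover x : exists2 t, t < size Bs & x \in B t.
Proof.
case: step1 => _ /setP/(_ x); rewrite !inE => /negbFE/bigcupP[t _ xt].
by exists t.
Qed.

Section GoodClusters.
Variables (sigma : 'I_n -> 'I_k) (Gd : {set 'I_n}).
Hypothesis cluster_size : forall a, #|cluster sigma a| = n %/ k.
Let r : R := (n%:R / (4 * k)%:R)%R.
Hypothesis good_close :
  {in Gd &, forall u w, sigma u = sigma w -> (rowdist Y u w <= r)%R}.
Hypothesis good_separated : forall x, {in Gd &, forall w1 w2,
  (rowdist Y x w1 <= r)%R -> (rowdist Y x w2 <= r)%R -> sigma w1 = sigma w2}.
Let G a := cluster sigma a :&: Gd.

Lemma exists_cluster_block a : G a != set0 -> exists2 t, t < size Bs &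
  [&& B t :&: G a != set0, B t :&: Gd \subset cluster sigma a & #|G a| <= #|B t|].
Proof.
move=> /set0Pn[x xG]; set t := find (fun X => X :&: G a != set0) Bs.
have meets : has (fun X => X :&: G a != set0) Bs.
  have [s sN xs] := step1_blocks_cover x.
  by apply/(has_nthP set0); exists s => //; apply/set0Pn; exists x; rewrite inE xs.
have tN : t < size Bs by rewrite -has_find.
have Bt_meets : B t :&: G a != set0 := nth_find set0 meets.
have GV : G a \subset V t.
  apply: subset_Vrem => s st; rewrite disjoint_sym -setI_eq0.
  exact: negbFE (before_find set0 st).
have [u uV Bu] := step1_block_center tN.
have /set0Pn[v] := Bt_meets; rewrite !inE => /andP[vB /andP[/eqP va vGd]].
have near_u y : y \in B t -> (rowdist Y u y <= r)%R.
  by move=> yB; have := subsetP Bu y yB; rewrite inE => /andP[].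
exists t => //; apply/and3P; split => //.
  apply/subsetP => y; rewrite !inE => /andP[yB yGd].
  by rewrite -va (good_separated (x:=u) yGd vGd) ?near_u.
apply: (step1_block_max tN (subsetP GV v _)); first by rewrite !inE va eqxx.
  apply/subsetP => y yG; rewrite inE (subsetP GV y yG).
  move: yG; rewrite !inE => /andP[/eqP ya yGd].
  by apply: good_close; rewrite ?va.
by rewrite -(cluster_size a) subset_leq_card ?subsetIl.
Qed.

Section Selection.
Local Notation N := (size Bs).
Variable f : 'I_k -> 'I_N.
Hypothesis f_inj : injective f.
Hypothesis f_largest :
  forall a (j : 'I_N), j \notin codom f -> #|B j| <= #|B (f a)|.
Variable U : 'I_k -> {set 'I_n}.
Hypothesis f_sub_U : forall a, B (f a) \subset U a.

Let block (j : 'I_N) := B j.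
Let fits a (j : 'I_N) :=
  [&& B j :&: G a != set0, B j :&: Gd \subset cluster sigma a & #|G a| <= #|B j|].
Let occupied := [set a | G a != set0].
(* The default [f a] is never used for [a \in occupied]: see [exists_cluster_block]. *)
Let cluster_block a : 'I_N := odflt (f a) [pick j | fits a j].
Let cluster_blocks := cluster_block @: occupied.
Let selected := f @: setT.
Let cluster_cover := \bigcup_(j in cluster_blocks) block j.

Let block_disjoint i j : i != j -> [disjoint block i & block j].
Proof. by move=> ij; apply: step1_blocks_disjoint. Qed.

Lemma cluster_block_fits a : a \in occupied -> fits a (cluster_block a).
Proof.
rewrite inE => /exists_cluster_block[t tN fits_t]; rewrite /cluster_block.
by case: pickP => [j // | /(_ (Ordinal tN))]; rewrite /fits fits_t.
Qed.

Lemma cluster_block_inj : {in occupied &, injective cluster_block}.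
Proof.
move=> a a' aP a'P blk_aa'.
have /and3P[/set0Pn[v vBG] _ _] := cluster_block_fits aP.
move: vBG; rewrite !inE => /andP[vB /andP[/eqP <- vGd]].
have /and3P[_ /subsetP/(_ v) + _] := cluster_block_fits a'P.
by rewrite !inE -blk_aa' vB vGd => /(_ isT)/eqP.
Qed.

Lemma card_good_le_cluster_cover : #|Gd| <= #|cluster_cover|.
Proof.
have Gd_cover : Gd = \bigcup_(a in setT) G a.
  apply/setP => x; apply/idP/bigcupP => [xGd | [a _]]; last by rewrite inE => /andP[].
  by exists (sigma x); rewrite ?inE ?eqxx.
have G_disjoint : {in setT &, forall a a', a != a' -> [disjoint G a & G a']}.
  move=> a a' _ _ aa'; rewrite -setI_eq0; apply/eqP/setP => x; rewrite !inE.
  apply/negbTE/negP => /andP[/andP[/eqP xa _] /andP[/eqP xa' _]].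
  by move: aa'; rewrite -xa -xa' eqxx.
rewrite Gd_cover card_bigcup_disjoint // /cluster_cover.
rewrite card_bigcup_disjoint; last first.
  by move=> i j _ _; apply: block_disjoint.
rewrite big_imset /=; last exact: cluster_block_inj.
rewrite (bigID (mem occupied)) /= addnC big1 => [|a]; last first.
  by rewrite !inE negbK => /andP[_ /eqP ->]; rewrite cards0.
rewrite add0n (eq_bigl (mem occupied)) => [|a]; last by rewrite in_setT.
by apply: leq_sum => a aP; have /and3P[_ _] := cluster_block_fits aP.
Qed.

Lemma card_outside_cluster_cover : #|~: cluster_cover| <= #|~: Gd|.
Proof.
rewrite -(leq_add2l #|cluster_cover|) cardsC -(cardsC Gd) leq_add2r.
exact: card_good_le_cluster_cover.
Qed.

Lemma card_unselected_blocks :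
  #|\bigcup_(j in cluster_blocks :\: selected) block j| <= #|~: Gd|.
Proof.
have cardKS : #|cluster_blocks| <= #|selected|.
  rewrite /selected card_imset // cardsT card_ord.
  by apply: leq_trans (leq_imset_card _ _) (leq_trans (max_card _) _); rewrite card_ord.
have Sel_largest : {in selected & ~: selected, forall i j, #|block j| <= #|block i|}.
  move=> _ j /imsetP[a _ ->]; rewrite inE => jS; apply: f_largest.
  by apply: contra jS => /codomP[a' ->]; rewrite imset_f.
apply: leq_trans (leq_card_bigcup_exchange block_disjoint Sel_largest cardKS) _.
have : \bigcup_(j in selected :\: cluster_blocks) block j \subset ~: cluster_cover.
  apply/bigcupsP => j /setDP[_ jK]; rewrite -disjoints_subset /cluster_cover.
  apply: bigcup_disjoint => i iK; apply: block_disjoint.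
  by apply: contraNneq jK => ->.
move/subset_leq_card/leq_trans; apply; exact: card_outside_cluster_cover.
Qed.

Lemma exists_matching_perm :
  exists pi : {perm 'I_k}, {in occupied, forall a,
    cluster_block a \in selected -> f (pi a) = cluster_block a}.
Proof.
pose D := [set a in occupied | cluster_block a \in selected].
pose g a := odflt a [pick c | f c == cluster_block a].
have fg a : a \in D -> f (g a) = cluster_block a.
  rewrite inE => /andP[_ /imsetP[c _ blk_a]]; rewrite /g.
  by case: pickP => [c' /eqP // | /(_ c)]; rewrite blk_a eqxx.
have g_inj : {in D &, injective g}.
  move=> a a' aD a'D gaa'; apply: cluster_block_inj; rewrite -?fg ?gaa' //.
    by move: aD; rewrite inE => /andP[].
  by move: a'D; rewrite inE => /andP[].
have [pi piE] := perm_extend_in g_inj.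
by exists pi => a aP aS; rewrite piE ?fg // inE aP.
Qed.

(* A point missed by the matching is bad, outside every cluster block, or in a
   cluster block that Step 2 did not select. *)
Lemma card_recovered_clusters : exists pi : {perm 'I_k},
  n <= #|\bigcup_(a < k) (cluster sigma a :&: U (pi a))| + 3 * #|~: Gd|.
Proof.
have [pi piE] := exists_matching_perm; exists pi.
set Cs := \bigcup_(a < k) _.
set W := \bigcup_(j in cluster_blocks :\: selected) block j.
have sub : ~: Cs \subset (~: Gd :|: ~: cluster_cover) :|: W.
  apply/subsetP => x; rewrite in_setC; apply: contraNT.
  rewrite !inE !negb_or !negbK => /andP[/andP[xGd /bigcupP[_ /imsetP[a aP ->] xB]] xW].
  have /and3P[_ /subsetP/(_ x) x_a _] := cluster_block_fits aP.
  have aS : cluster_block a \in selected.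
    apply: contraNT xW => aS; apply/bigcupP; exists (cluster_block a) => //.
    by rewrite !inE aS imset_f.
  apply/bigcupP; exists a => //; rewrite inE x_a ?inE ?xB ?xGd //=.
  by apply: (subsetP (f_sub_U (pi a))); rewrite piE.
have := subset_leq_card sub; rewrite -(leq_add2l #|Cs|) cardsC card_ord => /leq_trans.
apply; rewrite leq_add2l.
apply: leq_trans (leq_card_setU _ _) _; rewrite mulSn mul2n -addnn addnA.
apply: leq_add; last exact: card_unselected_blocks.
apply: leq_trans (leq_card_setU _ _) _; rewrite leq_add2l.
exact: card_outside_cluster_cover.
Qed.

End Selection.

Lemma step2_recovers_clusters (U : 'I_k -> {set 'I_n}) : step2_output Bs U ->
  exists pi : {perm 'I_k},
    n <= #|\bigcup_(a < k) (cluster sigma a :&: U (pi a))| + 3 * #|~: Gd|.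
Proof.
by case=> f [f_inj f_largest f_sub_U _ _]; apply: card_recovered_clusters f_sub_U.
Qed.

End GoodClusters.

End Step1Blocks.

Local Open Scope ring_scope.

Lemma card_gt_mul_le_sum (R : numDomainType) (T : finType) (F : T -> R) c :
  (forall x, 0 <= F x) -> #|[set x | c < F x]|%:R * c <= \sum_x F x.
Proof.
move=> F_ge0; rewrite mulr_natl -sumr_const.
apply: (@le_trans _ _ (\sum_(x | c < F x) F x)).
  rewrite (eq_bigl (fun x => c < F x)) => [|x]; last by rewrite inE.
  by apply: ler_sum => x /ltW.
by rewrite [X in _ <= X](bigID (fun x => c < F x)) /= lerDl sumr_ge0.
Qed.

Section RowDistances.
Variables (R : realType) (n : nat).
Implicit Types Y Z : 'M[R]_n.

Definition row_l1dist Y Z (u : 'I_n) : R := \sum_j `|Y u j - Z u j|.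

Lemma row_l1distC Y Z u : row_l1dist Y Z u = row_l1dist Z Y u.
Proof. by apply: eq_bigr => j _; rewrite distrC. Qed.

Lemma l1norm_rows Y Z : l1norm (Y - Z) = \sum_u row_l1dist Y Z u.
Proof. by apply: eq_bigr => u _; apply: eq_bigr => j _; rewrite !mxE. Qed.

Lemma rowdistC Y u w : rowdist Y u w = rowdist Y w u.
Proof. by apply: eq_bigr => j _; rewrite distrC. Qed.

Lemma rowdist_triangle Y u v w : rowdist Y u w <= rowdist Y u v + rowdist Y v w.
Proof.
rewrite -big_split /=; apply: ler_sum => j _.
by rewrite (le_trans _ (ler_normD _ _)) // addrA subrK.
Qed.

Lemma rowdist_perturb Y Z u w :
  rowdist Y u w <= row_l1dist Y Z u + rowdist Z u w + row_l1dist Y Z w.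
Proof.
rewrite -!big_split /=; apply: ler_sum => j _.
have -> : Y u j - Y w j = (Y u j - Z u j) + (Z u j - Z w j) - (Y w j - Z w j).
  by ring.
by rewrite (le_trans (ler_normB _ _)) ?lerD2r ?ler_normD.
Qed.

Variables (k : nat) (sigma : 'I_n -> 'I_k).
Local Notation Ys := (Ystar R sigma).

Lemma sum_Ystar_row u : \sum_j Ys u j = #|cluster sigma (sigma u)|%:R.
Proof.
rewrite -sum1_card natr_sum [RHS]big_mkcond /=; apply: eq_bigr => j _.
by rewrite mxE inE eq_sym; case: eqP.
Qed.

Lemma rowdist_Ystar_eq u w : sigma u = sigma w -> rowdist Ys u w = 0.
Proof. by move=> suw; apply: big1 => j _; rewrite !mxE suw subrr normr0. Qed.

Lemma rowdist_Ystar_neq u w : sigma u != sigma w ->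
  rowdist Ys u w = (#|cluster sigma (sigma u)| + #|cluster sigma (sigma w)|)%:R.
Proof.
move=> suw; rewrite natrD -!sum_Ystar_row -big_split /=; apply: eq_bigr => j _.
rewrite !mxE; case: (sigma u =P sigma j) => [<- | _] /=.
  by rewrite eq_sym (negbTE suw) subr0 normr1 addr0.
by case: (sigma w == sigma j); rewrite ?sub0r ?normrN ?subr0 ?normr1 ?normr0 ?add0r.
Qed.

Lemma l1norm_Ystar : l1norm Ys = \sum_u #|cluster sigma (sigma u)|%:R.
Proof.
apply: eq_bigr => u _; rewrite -sum_Ystar_row; apply: eq_bigr => j _.
by rewrite ger0_norm // mxE ler0n.
Qed.

End RowDistances.

Lemma ball_radiusE (R : numFieldType) (n k : nat) : (0 < k)%N -> (k %| n)%N ->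
  n%:R / (4 * k)%:R = (n %/ k)%:R / 4 :> R.
Proof.
move=> k_gt0 /divnK {1}<-; rewrite natrM (natrM _ 4) mulrC.
by field; rewrite pnatr_eq0 -lt0n k_gt0.
Qed.

Section GoodRows.
Variables (R : realType) (n k : nat) (sigma : 'I_n -> 'I_k) (Y : 'M[R]_n).
Hypotheses (k_gt0 : (0 < k)%N) (k_dvd_n : (k %| n)%N).
Hypothesis cluster_size : forall a, #|cluster sigma a| = (n %/ k)%N.
Local Notation Ys := (Ystar R sigma).
Local Notation m := (n %/ k)%N.

Definition good_rows := [set u | row_l1dist Y Ys u <= m%:R / 8].

Lemma good_rows_close : {in good_rows &, forall u w,
  sigma u = sigma w -> rowdist Y u w <= n%:R / (4 * k)%:R}.
Proof.
move=> u w; rewrite !inE ball_radiusE // => eu ew suw.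
apply: le_trans (rowdist_perturb Y Ys u w) _.
by rewrite rowdist_Ystar_eq // addr0; lra.
Qed.

Lemma good_rows_separated x : {in good_rows &, forall w1 w2,
  rowdist Y x w1 <= n%:R / (4 * k)%:R -> rowdist Y x w2 <= n%:R / (4 * k)%:R ->
  sigma w1 = sigma w2}.
Proof.
move=> w1 w2; rewrite !inE ball_radiusE // => e1 e2 d1 d2.
apply/eqP; apply: contraT => /rowdist_Ystar_neq; rewrite !cluster_size => ys.
have m_gt0 : 0 < m%:R :> R.
  rewrite ltr0n -(cluster_size (sigma w1)) card_gt0.
  by apply/set0Pn; exists w1; rewrite inE.
have d12 : rowdist Y w1 w2 <= m%:R / 2.
  by apply: le_trans (rowdist_triangle Y w1 x w2) _; rewrite rowdistC; lra.
have := rowdist_perturb Ys Y w1 w2; rewrite ys !(row_l1distC Ys) natrD; lra.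
Qed.

End GoodRows.

Theorem lemma13 (R : realType) :
  exists C : R, 0 < C /\
  forall (n k d : nat) (h : 'I_n -> 'rV[R]_d) (sigma : 'I_n -> 'I_k)
         (Yhat : 'M[R]_n) (Bs : seq {set 'I_n}) (U : 'I_k -> {set 'I_n}),
    (4 <= n)%N -> (2 <= k)%N -> (k %| n)%N ->
    (forall a : 'I_k, #|cluster sigma a| = (n %/ k)%N) ->
    sdp_optimal k h Yhat ->
    step1_output k Yhat Bs ->
    step2_output Bs U ->
    exists pi : {perm 'I_k},
      (1 - C * (l1norm (Yhat - Ystar R sigma) / l1norm (Ystar R sigma))) * n%:R
        <= #|\bigcup_(a < k) (cluster sigma a :&: U (pi a))|%:R.
Proof.
exists 24; split=> // n k d h sigma Yhat Bs U n_ge4 k_ge2 k_dvd_n cluster_size.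
move=> _ st1 st2.
have k_gt0 : (0 < k)%N by apply: leq_trans k_ge2.
have close := good_rows_close (sigma := sigma) (Y := Yhat) k_gt0 k_dvd_n.
have separated := good_rows_separated (Y := Yhat) k_gt0 k_dvd_n cluster_size.
have [pi recovered] := step2_recovers_clusters st1 cluster_size close separated st2.
exists pi; set m := (n %/ k)%N; set E := l1norm _.
have m_gt0 : (0 < m)%N by rewrite divn_gt0 // dvdn_leq // (leq_trans _ n_ge4).
have bad_rows : #|~: good_rows sigma Yhat|%:R * (m%:R / 8) <= E.
  have -> : ~: good_rows sigma Yhat =
      [set u | m%:R / 8 < row_l1dist Yhat (Ystar R sigma) u].
    by apply/setP => u; rewrite !inE ltNge.
  by rewrite /E l1norm_rows card_gt_mul_le_sum // => u; apply: sumr_ge0.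
have normYs : l1norm (Ystar R sigma) = n%:R * m%:R.
  rewrite l1norm_Ystar (eq_bigr (fun=> m%:R)) => [|u _]; last by rewrite cluster_size.
  by rewrite sumr_const card_ord mulr_natl.
have [m_pos n_pos] : 0 < m%:R :> R /\ 0 < n%:R :> R.
  by rewrite !ltr0n m_gt0 (leq_trans _ n_ge4).
have -> : (1 - 24 * (E / l1norm (Ystar R sigma))) * n%:R = n%:R - 24 * E / m%:R.
  by rewrite normYs; field; rewrite !gt_eqF.
have : 3 * #|~: good_rows sigma Yhat|%:R <= 24 * E / m%:R :> R.
  by rewrite ler_pdivlMr //; nra.
by move: recovered; rewrite -(ler_nat R) natrD natrM; lra.
Qed.
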